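(* Let $M$ be an endo-AIP right $R$-module and $S=\mathrm{End}_R(M)$. If $S$ is a local ring, then $S$ is a prime ring.
   Context: For $N\le M$, $l_S(N)=\{\phi\in S:\phi(N)=0\}$. An ideal $I$ of $S$ is right s-unital if for every $a\in I$ there is $x\in I$ with $ax=a$. $M$ is endo-AIP if $l_S(N)$ is a right s-unital ideal of $S$ for every fully invariant submodule $N$ of $M$. *)

From HB Require Import structures.
From mathcomp Require Import all_boot all_order all_algebra.
Set Implicit Arguments. Unset Strict Implicit. Unset Printing Implicit Defensive.
Import GRing.Theory.
Local Open Scope ring_scope.

(* A right R-module is modelled as a left module over the converse ring R^c.
   S = End_R(M) is the type {linear M -> M} of R-linear endomorphisms, with
   ring addition pointwise and ring product  f * g := f \o g  (endomorphisms
   act on the left of M).  Equality in S is extensional equality of maps. *)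

Section EndoRing.
Variables (R : pzRingType) (M : lmodType R^c).

Definition Endo := {linear M -> M}.

Definition is_submodule (N : M -> Prop) : Prop :=
  [/\ N 0, (forall x y, N x -> N y -> N (x + y)) &
      (forall (r : R^c) x, N x -> N (r *: x))].

Definition fully_invariant (N : M -> Prop) : Prop :=
  forall (phi : Endo) x, N x -> N (phi x).

Definition lS (N : M -> Prop) : Endo -> Prop :=
  fun phi => forall x, N x -> phi x = 0.

Definition is_ideal (I : Endo -> Prop) : Prop :=
  [/\ (exists a, I a /\ forall x, a x = 0),
      (forall a b : Endo, I a -> I b -> forall c : Endo, (forall x, c x = a x + b x) -> I c),
      (forall a : Endo, I a -> forall c : Endo, (forall x, c x = - a x) -> I c),
      (forall (a s : Endo), I a -> forall c : Endo, (forall x, c x = s (a x)) -> I c) &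
      (forall (a s : Endo), I a -> forall c : Endo, (forall x, c x = a (s x)) -> I c)].

Definition is_right_ideal (I : Endo -> Prop) : Prop :=
  [/\ (exists a, I a /\ forall x, a x = 0),
      (forall a b : Endo, I a -> I b -> forall c : Endo, (forall x, c x = a x + b x) -> I c),
      (forall a : Endo, I a -> forall c : Endo, (forall x, c x = - a x) -> I c) &
      (forall (a s : Endo), I a -> forall c : Endo, (forall x, c x = a (s x)) -> I c)].

Definition right_s_unital_ideal (I : Endo -> Prop) : Prop :=
  is_ideal I /\ forall a, I a -> exists2 x : Endo, I x & forall m, a (x m) = a m.

Definition endo_AIP : Prop :=
  forall N : M -> Prop, is_submodule N -> fully_invariant N ->
    right_s_unital_ideal (lS N).

Definition maximal_right_ideal (I : Endo -> Prop) : Prop :=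
  [/\ is_right_ideal I, (exists a : Endo, ~ I a) &
      forall J : Endo -> Prop, is_right_ideal J -> (forall a, I a -> J a) ->
        (forall a, J a <-> I a) \/ (forall a, J a)].

Definition local_End : Prop :=
  exists2 I : Endo -> Prop, maximal_right_ideal I &
    forall J, maximal_right_ideal J -> forall a, J a <-> I a.

Definition prime_End : Prop :=
  forall a b : Endo, (forall (s : Endo) x, a (s (b x)) = 0) ->
    (forall x, a x = 0) \/ (forall x, b x = 0).

End EndoRing.

(* Since S is local, for every x in S either x or 1 - x is right invertible
   (a non-right-invertible x generates a proper right ideal, which by Zorn lies
   in a maximal one, hence in the unique maximal right ideal).  Given a S b = 0,
   the set N of m with a S m = 0 is a fully invariant submodule containing
   b(M), and a lies in l_S(N); s-unitality gives x in l_S(N) with a x = a.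
   If x t = 1 then b = x t b = 0 because t b(M) lies in N; if (1 - x) t = 1
   then a = a (1 - x) t = 0. *)

From mathcomp Require Import all_boot all_order all_algebra.
From mathcomp Require Import boolp classical_sets.
Set Implicit Arguments. Unset Strict Implicit. Unset Printing Implicit Defensive.
Import GRing.Theory.
Local Open Scope classical_set_scope.
Local Open Scope ring_scope.

Section RightIdeals.
Variables (R : pzRingType) (M : lmodType R^c).
Local Notation S := (Endo M).

Definition proper_right_ideal (J : set S) := is_right_ideal J /\ ~ J idfun.

Definition right_invertible (x : S) := exists t : S, forall m, x (t m) = m.

Definition principal_right_ideal (x : S) : set S :=
  [set c | exists s : S, forall m, c m = x (s m)].

Lemma right_ideal_full (J : set S) : is_right_ideal J -> J idfun -> forall a, J a.
Proof. by case=> _ _ _ J_mulr J1 a; apply: (J_mulr _ a J1). Qed.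

Lemma maximal_right_ideal_proper (I : set S) :
  maximal_right_ideal I -> proper_right_ideal I.
Proof.
case=> I_ri [a Ia] _; split=> // I1.
by apply: Ia; apply: right_ideal_full.
Qed.

Lemma principal_right_idealP (x : S) : is_right_ideal (principal_right_ideal x).
Proof.
split.
- by exists \0; split=> // ; exists \0 => m /=; rewrite linear0.
- move=> a b [s as_] [t bt] c cE; exists (s \+ t) => m.
  by rewrite cE as_ bt /= linearD.
- by move=> a [s as_] c cE; exists (\- s) => m; rewrite cE as_ /= linearN.
- by move=> a t [s as_] c cE; exists (s \o t)%FUN => m; rewrite cE as_.
Qed.

Lemma principal_right_ideal_proper (x : S) :
  ~ right_invertible x -> proper_right_ideal (principal_right_ideal x).
Proof.
move=> x_nrinv; split; first exact: principal_right_idealP.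
by case=> t xt; apply: x_nrinv; exists t => m; rewrite -xt.
Qed.

Lemma chain_bigcup_right_ideal (F : set (set S)) :
  F !=set0 -> (forall K, F K -> is_right_ideal K) -> total_on F subset ->
  is_right_ideal (\bigcup_(K in F) K).
Proof.
move=> [K0 FK0] F_ri F_chain.
have common a b : (\bigcup_(K in F) K) a -> (\bigcup_(K in F) K) b ->
    exists2 K, F K & K a /\ K b.
  move=> [Ka FKa Kaa] [Kb FKb Kbb].
  by case: (F_chain _ _ FKa FKb) => [/(_ a Kaa)|/(_ b Kbb)];
    [exists Kb | exists Ka].
split.
- case: (F_ri _ FK0) => -[z [K0z z0]] _ _ _.
  by exists z; split=> //; exists K0.
- move=> a b Ua Ub c cE; have [K FK [Ka Kb]] := common _ _ Ua Ub.
  by exists K => //; case: (F_ri _ FK) => _ K_add _ _; apply: K_add Ka Kb c cE.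
- move=> a [K FK Ka] c cE; exists K => //.
  by case: (F_ri _ FK) => _ _ K_opp _; apply: K_opp Ka c cE.
- move=> a s [K FK Ka] c cE; exists K => //.
  by case: (F_ri _ FK) => _ _ _ K_mulr; apply: K_mulr Ka c cE.
Qed.

(* Zorn is applied to the sets K with J `|` K proper, so that the empty chain
   is admissible. *)
Lemma proper_right_ideal_sub_maximal (J : set S) :
  proper_right_ideal J -> exists2 I, maximal_right_ideal I & J `<=` I.
Proof.
move=> J_proper.
pose P (K : set S) := proper_right_ideal (J `|` K).
have [A [PA A_max]] : exists A, P A /\ forall B, A `<` B -> ~ P B.
  apply: Zorn_bigcup => F FP F_chain.
  have [-> | /set0P [K0 FK0]] := eqVneq F set0.
    by rewrite /P bigcup_set0 setU0.
  pose G := [set J `|` K | K in F].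
  have UG : J `|` \bigcup_(K in F) K = \bigcup_(L in G) L.
    apply/seteqP; split=> [a [Ja | [K FK Ka]] | a [_ [K FK <-] La]].
    - by exists (J `|` K0); [exists K0 | left].
    - by exists (J `|` K); [exists K | right].
    - by case: La => [Ja | Ka]; [left | right; exists K].
  rewrite /P UG; split.
  - apply: chain_bigcup_right_ideal => [|_ [K FK <-]|_ _ [K FK <-] [L FL <-]].
    + by exists (J `|` K0), K0.
    + by case: (FP _ FK).
    + by case: (F_chain _ _ FK FL) => KL; [left | right]; apply: setUS.
  - by case=> _ [K FK <-]; case: (FP _ FK).
exists (J `|` A); last exact: subsetUl.
split; first exact: PA.1.
  by exists idfun; apply: PA.2.
move=> K K_ri JAK.
have [K1 | K_proper] := pselect (K idfun); first by right; apply: right_ideal_full.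
left; have [KJA | nKJA] := pselect (K `<=` J `|` A).
  by move=> a; split => [/KJA | /JAK].
have JK : J `<=` K by move=> a Ja; apply: JAK; left.
exfalso; apply: (A_max K); last by rewrite /P (setUidPr _ _).2.
split; first by move=> a Aa; apply: JAK; right.
by move=> KA; apply: nKJA => a /KA; right.
Qed.

Lemma local_End_rinv_or_1B (x : S) :
  local_End M -> right_invertible x \/ right_invertible (idfun \- x).
Proof.
case=> I I_max I_unique.
have in_I y : ~ right_invertible y -> I y.
  move=> /principal_right_ideal_proper /proper_right_ideal_sub_maximal [J J_max yS_J].
  by apply/(I_unique J J_max)/yS_J; exists idfun.
have [|xI] := pselect (right_invertible x); first by left.
have [|x1I] := pselect (right_invertible (idfun \- x)); first by right.
have [I_ri I1] := maximal_right_ideal_proper I_max.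
case: I_ri => _ I_add _ _; exfalso; apply: I1.
apply: (I_add _ _ (in_I _ xI) (in_I _ x1I)).
by move=> m /=; rewrite addrC subrK.
Qed.

End RightIdeals.

Section KernelOfaS.
Variables (R : pzRingType) (M : lmodType R^c) (a : Endo M).

Definition ker_aS : set M := [set y | forall s : Endo M, a (s y) = 0].

Lemma ker_aS_submodule : is_submodule ker_aS.
Proof.
split.
- by move=> s; rewrite !linear0.
- by move=> y z Hy Hz s; rewrite !linearD /= Hy Hz addr0.
- by move=> r y Hy s; rewrite !linearZ /= Hy scaler0.
Qed.

Lemma ker_aS_fully_invariant : fully_invariant ker_aS.
Proof. by move=> phi y Hy s; apply: (Hy (s \o phi)%FUN). Qed.

Lemma lS_ker_aS : lS ker_aS a.
Proof. by move=> y Hy; apply: (Hy idfun). Qed.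

End KernelOfaS.

Theorem proposition3p9 (R : pzRingType) (M : lmodType R^c) :
  endo_AIP M -> local_End M -> prime_End M.
Proof.
move=> aip local a b aSb0.
have [_ s_unital] := aip _ (ker_aS_submodule a) (@ker_aS_fully_invariant _ _ a).
have [x xN ax] := s_unital a (@lS_ker_aS _ _ a).
have [[t xt] | [t x1t]] := local_End_rinv_or_1B x local.
- right => m; rewrite -(xt (b m)); apply: xN => s.
  exact: (aSb0 (s \o t)%FUN).
- by left => m; rewrite -(x1t m) /= linearB /= ax subrr.
Qed.
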